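(* Let $\mathcal{X}\subset\mathbb{R}^d$ and let $\mathbb{P},\mathbb{Q},\mu$ be probability distributions on $\mathcal{X}$ with densities (denoted by the same letters), where $\mu(x)>0$ for all $x\in\mathcal{X}$. Let $\mathcal{L}_2(\mathcal{X},\mu)$ be the space of measurable $f:\mathcal{X}\to\mathbb{R}$ with $\|f\|_{\mathcal{L}_2(\mathcal{X},\mu)}=\sqrt{\int_{\mathcal{X}} f^2(x)\mu(x)\,dx}<\infty$, and define the generalized Fisher IPM $$\mathcal{F}_\mu(\mathbb{P},\mathbb{Q})=\sup_{f\in\mathcal{L}_2(\mathcal{X},\mu),\ \|f\|_{\mathcal{L}_2(\mathcal{X},\mu)}\le 1}\Big(\mathbb{E}_{x\sim\mathbb{P}}f(x)-\mathbb{E}_{x\sim\mathbb{Q}}f(x)\Big).$$ Then: (1) $\mathcal{F}_\mu(\mathbb{P},\mathbb{Q})=\Big\|\frac{\mathbb{P}-\mathbb{Q}}{\mu}\Big\|_{\mathcal{L}_2(\mathcal{X},\mu)}=\sqrt{\mathbb{E}_{x\sim\mu}\Big(\frac{\mathbb{P}(x)-\mathbb{Q}(x)}{\mu(x)}\Big)^2}$; (2) when this quantity is finite and nonzero, the supremum is attained by the critic $f_\chi=\frac{1}{\mathcal{F}_\mu(\mathbb{P},\mathbb{Q})}\,\frac{\mathbb{P}-\mathbb{Q}}{\mu}$, $\mu$-almost surely.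
   Context: $\mu$ is a dominant measure for $\mathbb{P}$ and $\mathbb{Q}$: $\mu(x)=0$ implies $\mathbb{P}(x)=\mathbb{Q}(x)=0$ (automatic here since $\mu>0$ everywhere). *)

From HB Require Import structures.
From mathcomp Require Import all_boot all_order all_algebra.
From mathcomp Require Import all_classical all_reals all_analysis.
Set Implicit Arguments. Unset Strict Implicit. Unset Printing Implicit Defensive.
Import Order.TTheory GRing.Theory Num.Theory.
Local Open Scope classical_set_scope.
Local Open Scope ring_scope.
Local Open Scope ereal_scope.

Section Fisher.
Context {dT : measure_display} {T : measurableType dT} {R : realType}.
Variables (lam : {measure set T -> \bar R}) (X : set T).

(* g is a probability density on X w.r.t. the base measure lam ("dx") *)
Definition is_density (g : T -> R) : Prop :=
  measurable_fun X g /\ (forall x, X x -> (0 <= g x)%R) /\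
  \int[lam]_(x in X) (g x)%:E = 1.

Definition L2norm (mu : T -> R) (f : T -> R) : \bar R :=
  sqrte (\int[lam]_(x in X) ((f x ^+ 2 * mu x)%R)%:E).

Definition inL2 (mu : T -> R) (f : T -> R) : Prop :=
  measurable_fun X f /\ L2norm mu f < +oo.

(* E_{x~P} f(x) - E_{x~Q} f(x), written as \int_X f(x) (P(x) - Q(x)) dx *)
Definition mean_diff (p q : T -> R) (f : T -> R) : \bar R :=
  \int[lam]_(x in X) ((f x * (p x - q x))%R)%:E.

Definition fisher_ipm (mu p q : T -> R) : \bar R :=
  ereal_sup [set mean_diff p q f | f in
               [set f | inL2 mu f /\ L2norm mu f <= 1]].

(* a property holds mu-almost surely on X, mu being the density of the
   measure mu(x)dx: it holds outside a measurable set of mu-measure 0 *)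
Definition mu_ae (mu : T -> R) (P : T -> Prop) : Prop :=
  exists N : set T, measurable N /\ N `<=` X /\
    \int[lam]_(x in N) (mu x)%:E = 0 /\ (forall x, X x -> ~ N x -> P x).

End Fisher.

(* With [r := (P - Q) / mu], the objective [E_P f - E_Q f] is the inner product
   [\int f r mu] of L2(mu), so the Fisher IPM is the norm of [r] in L2(mu).
   The upper bound is Cauchy-Schwarz, obtained by integrating
   [a b <= t a^2 / 2 + b^2 / (2 t)] with [t] the norm of [r].  For the lower
   bound, the truncations [r 1_{|r| <= n}] have finite norm because [mu] is
   integrable, so they normalize into admissible critics, and their norms
   increase to that of [r] by monotone convergence.  An optimal critic [f]
   satisfies [||f - r / ||r|| ||^2 = ||f||^2 + 1 - 2 <= 0], hence uniqueness. *)

From HB Require Import structures.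
From mathcomp Require Import all_boot all_order all_algebra.
From mathcomp Require Import all_classical all_reals all_analysis.
From mathcomp Require Import measurable_realfun ring lra.
Set Implicit Arguments. Unset Strict Implicit. Unset Printing Implicit Defensive.
Import Order.TTheory GRing.Theory Num.Theory.
Local Open Scope classical_set_scope.
Local Open Scope ring_scope.

Lemma mulr_le_amgm (R : realFieldType) (a b t : R) : 0 < t ->
  a * b <= t / 2 * a ^+ 2 + (2 * t)^-1 * b ^+ 2.
Proof.
move=> t0.
have tV0 : 0 <= t^-1 by rewrite invr_ge0 ltW.
have := mulr_ge0 tV0 (sqr_ge0 (t * a - b)).
have -> : t^-1 * (t * a - b) ^+ 2 = t * a ^+ 2 - 2 * a * b + t^-1 * b ^+ 2.
  by field; rewrite gt_eqF.
rewrite invfM; lra.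
Qed.

Lemma measurable_funV_pos d (T : measurableType d) (R : realType) (D : set T)
    (g : T -> R) :
  measurable D -> measurable_fun D g -> (forall x, D x -> 0 < g x) ->
  measurable_fun D (fun x => (g x)^-1).
Proof.
move=> mD mg g_pos; change (measurable_fun D (GRing.inv \o g)).
apply: (measurable_comp (T2 := R) (T3 := R) (F := `]0, +oo[%classic)
  (f := GRing.inv)) => //.
- by move=> _ [x Dx <-]; rewrite /= in_itv /= andbT g_pos.
- apply: open_continuous_measurable_fun; first exact: interval_open.
  move=> x /[!inE] /= /[!in_itv] /= /andP[x_gt0 _].
  by apply: inv_continuous; rewrite gt_eqF.
Qed.

Definition cutoff (R : numDomainType) (T : Type) (n : nat) (r : T -> R) (x : T) : R :=
  if `|r x| <= n%:R then r x else 0.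

Lemma cutoff_mul (R : numDomainType) (T : Type) n (r : T -> R) x :
  cutoff n r x * r x = cutoff n r x ^+ 2.
Proof. by rewrite /cutoff expr2; case: ifP; rewrite ?mul0r. Qed.

Section WeightedL2.
Context {dT : measure_display} {T : measurableType dT} {R : realType}.
Variables (lam : {measure set T -> \bar R}) (X : set T) (mu : T -> R).
Hypotheses (mX : measurable X) (mmu : measurable_fun X mu)
  (mu_ge0 : forall x, X x -> 0 <= mu x).
Implicit Types (f g h r : T -> R) (c i k : R).

Definition L2sq (f : T -> R) : \bar R :=
  (\int[lam]_(x in X) (f x ^+ 2 * mu x)%:E)%E.

Definition L2dot (f g : T -> R) : \bar R :=
  (\int[lam]_(x in X) (f x * g x * mu x)%:E)%E.

Lemma L2normE f : L2norm lam X mu f = sqrte (L2sq f).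
Proof. by []. Qed.

Lemma sqr_mu_ge0 f x : X x -> (0 <= (f x ^+ 2 * mu x)%:E)%E.
Proof. by move=> Xx; rewrite lee_fin mulr_ge0 ?sqr_ge0 ?mu_ge0. Qed.

Lemma L2sq_ge0 f : (0 <= L2sq f)%E.
Proof. exact: integral_ge0 (sqr_mu_ge0 f). Qed.

Lemma L2norm_le1 f : (L2norm lam X mu f <= 1)%E = (L2sq f <= 1)%E.
Proof.
have sqrte1 : sqrte (1 : \bar R) = 1%E by rewrite /= sqrtr1.
by rewrite L2normE -[X in (_ <= X)%E]sqrte1 lee_sqrt.
Qed.

Lemma measurable_sqr_mu f : measurable_fun X f ->
  measurable_fun X (fun x => (f x ^+ 2 * mu x)%:E).
Proof.
by move=> mf; apply/measurable_EFinP; exact: measurable_funM (measurable_funX _ mf) mmu.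
Qed.

Lemma measurable_prod_mu f g : measurable_fun X f -> measurable_fun X g ->
  measurable_fun X (fun x => (f x * g x * mu x)%:E).
Proof.
move=> mf mg; apply/measurable_EFinP.
by apply: measurable_funM => //; exact: measurable_funM.
Qed.

Lemma L2sqZ c f : measurable_fun X f ->
  L2sq (fun x => c * f x) = ((c ^+ 2)%:E * L2sq f)%E.
Proof.
move=> mf; rewrite /L2sq -ge0_integralZl_EFin ?sqr_ge0 //;
  [|exact: sqr_mu_ge0|exact: measurable_sqr_mu].
by apply: eq_integral => x _; rewrite -EFinM exprMn -mulrA.
Qed.

Lemma L2dotZl_self c f : 0 <= c -> measurable_fun X f ->
  L2dot (fun x => c * f x) f = (c%:E * L2sq f)%E.
Proof.
move=> c0 mf; rewrite /L2sq -ge0_integralZl_EFin //;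
  [|exact: sqr_mu_ge0|exact: measurable_sqr_mu].
by apply: eq_integral => x _; rewrite -EFinM expr2 !mulrA.
Qed.

Lemma L2sq_normalize_le1 f i : measurable_fun X f -> L2sq f = i%:E -> 0 <= i ->
  (L2sq (fun x => (Num.sqrt i)^-1 * f x)%R <= 1)%E.
Proof.
move=> mf fi i0; rewrite L2sqZ // fi -EFinM lee_fin -{2}(sqr_sqrtr i0) -exprMn.
by have [->|s0] := eqVneq (Num.sqrt i) 0; rewrite ?invr0 ?mul0r ?expr0n ?mulVf.
Qed.

Lemma L2dot_normalize f i : measurable_fun X f -> L2sq f = i%:E -> 0 <= i ->
  L2dot (fun x => (Num.sqrt i)^-1 * f x) f = (Num.sqrt i)%:E.
Proof.
move=> mf fi i0; rewrite L2dotZl_self ?invr_ge0 ?sqrtr_ge0 // fi -EFinM.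
rewrite -{2}(sqr_sqrtr i0) expr2.
by have [->|s0] := eqVneq (Num.sqrt i) 0; rewrite ?invr0 ?mul0r ?mulKf.
Qed.

Lemma integral_abs_prod_le f g t : measurable_fun X f -> measurable_fun X g -> 0 < t ->
  (\int[lam]_(x in X) `|(f x * g x * mu x)%:E| <=
    (t / 2)%:E * L2sq f + ((2 * t)^-1)%:E * L2sq g)%E.
Proof.
move=> mf mg t0.
have t2 : 0 <= t / 2 by rewrite divr_ge0 ?ltW.
have t2V : 0 <= (2 * t)^-1 by rewrite invr_ge0 mulr_ge0 ?ltW.
rewrite /L2sq -(ge0_integralZl_EFin _ _ (sqr_mu_ge0 f) (measurable_sqr_mu mf) t2) //.
rewrite -(ge0_integralZl_EFin _ _ (sqr_mu_ge0 g) (measurable_sqr_mu mg) t2V) //.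
have mZ h k : measurable_fun X h ->
    measurable_fun X (fun x => k%:E * (h x ^+ 2 * mu x)%:E)%E.
  by move=> mh; apply: emeasurable_funM => //; exact: measurable_sqr_mu.
have Z0 h k : 0 <= k -> forall x, X x -> (0 <= k%:E * (h x ^+ 2 * mu x)%:E)%E.
  by move=> k0 x Xx; apply: mule_ge0; [rewrite lee_fin | exact: sqr_mu_ge0].
rewrite -ge0_integralD //; try exact: Z0; try exact: mZ.
apply: ge0_le_integral => //.
- exact/measurableT_comp/measurable_prod_mu.
- exact: emeasurable_funD (mZ _ _ mf) (mZ _ _ mg).
move=> x Xx; rewrite -!EFinM -EFinD /= lee_fin !normrM (ger0_norm (mu_ge0 Xx)).
rewrite !mulrA -mulrDl ler_wpM2r ?mu_ge0 //.
by have := mulr_le_amgm `|f x| `|g x| t0; rewrite !real_normK ?num_real // !expr2 !mulrA.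
Qed.

Lemma L2dot_le_L2norm f g : measurable_fun X f -> measurable_fun X g ->
  (L2sq f <= 1)%E -> (L2dot f g <= L2norm lam X mu g)%E.
Proof.
move=> mf mg f1.
apply: le_trans (lee_abs _) _.
apply: le_trans (le_abse_integral lam mX (measurable_prod_mu mf mg)) _.
rewrite L2normE; case hg : (L2sq g) (L2sq_ge0 g) => [i| |] //= i0; last by rewrite leey.
rewrite lee_fin in i0; have [i_eq0|i_neq0] := eqVneq i 0.
  rewrite i_eq0 sqrtr0; apply/lee_addgt0Pr => e e0; rewrite add0e.
  have e2 : 0 < 2 * e by rewrite mulr_gt0.
  apply: le_trans (integral_abs_prod_le mf mg e2) _.
  rewrite hg i_eq0 -EFinM mulr0 adde0 mulrAC divff ?mul1r ?pnatr_eq0 //.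
  by rewrite -[leRHS]mule1; apply: lee_wpmul2l; rewrite // lee_fin ltW.
have s0 : 0 < Num.sqrt i by rewrite sqrtr_gt0 lt_def i_neq0.
apply: le_trans (integral_abs_prod_le mf mg s0) _; rewrite hg.
apply: le_trans (leeD2r _ (lee_wpmul2l _ f1)) _; first by rewrite lee_fin divr_ge0 ?ltW.
rewrite mule1 -EFinM -EFinD lee_fin -[X in _ + _ * X <= _](sqr_sqrtr i0).
by rewrite [leLHS](_ : _ = Num.sqrt i) //; field; rewrite gt_eqF.
Qed.

Lemma integrable_sqr_mu f : measurable_fun X f -> (L2sq f < +oo)%E ->
  lam.-integrable X (EFin \o (fun x => f x ^+ 2 * mu x)).
Proof.
move=> mf f_fin; apply/integrableP; split; first exact: measurable_sqr_mu.
rewrite (eq_integral (fun x => (f x ^+ 2 * mu x)%:E)) //.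
by move=> x /[!inE] Xx; rewrite gee0_abs ?sqr_mu_ge0.
Qed.

Lemma integrable_prod_mu f g : measurable_fun X f -> measurable_fun X g ->
  (L2sq f < +oo)%E -> (L2sq g < +oo)%E ->
  lam.-integrable X (fun x => (f x * g x * mu x)%:E).
Proof.
move=> mf mg f_fin g_fin; apply/integrableP; split; first exact: measurable_prod_mu.
apply: le_lt_trans (integral_abs_prod_le mf mg ltr01) _.
by rewrite lte_add_pinfty // lte_mul_pinfty // lee_fin invr_ge0 mulr_ge0.
Qed.

Lemma L2dotZr c f g : measurable_fun X f -> measurable_fun X g ->
  (L2sq f < +oo)%E -> (L2sq g < +oo)%E ->
  L2dot f (fun x => c * g x) = (c%:E * L2dot f g)%E.
Proof.
move=> mf mg f_fin g_fin; rewrite /L2dot -integralZl //; last exact: integrable_prod_mu.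
by apply: eq_integral => x _; rewrite -EFinM mulrCA !mulrA.
Qed.

Lemma L2sqB f g : measurable_fun X f -> measurable_fun X g ->
  (L2sq f < +oo)%E -> (L2sq g < +oo)%E ->
  L2sq (fun x => f x - g x) = (L2sq f + L2sq g - 2%:E * L2dot f g)%E.
Proof.
move=> mf mg f_fin g_fin.
have if2 := integrable_sqr_mu mf f_fin; have ig2 := integrable_sqr_mu mg g_fin.
have ifg := integrable_prod_mu mf mg f_fin g_fin.
rewrite /L2sq /L2dot -(integralD_EFin mX if2 ig2) -(integralZl mX ifg).
rewrite -(integralB_EFin mX (integrableD mX if2 ig2) (integrableZl mX 2 ifg)) /=.
by apply: eq_integral => x _; rewrite -EFinD; congr EFin; ring.
Qed.

Lemma L2sq_sub_eq0 f g : measurable_fun X f -> measurable_fun X g ->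
  (L2sq f <= 1)%E -> (L2sq g <= 1)%E -> L2dot f g = 1%E ->
  L2sq (fun x => f x - g x) = 0%E.
Proof.
move=> mf mg f1 g1 fg1.
have fin h : (L2sq h <= 1)%E -> (L2sq h < +oo)%E by move/le_lt_trans; apply; exact: ltey.
apply/eqP; rewrite eq_le L2sq_ge0 andbT L2sqB ?fin // fg1 mule1.
move: f1 g1 (L2sq_ge0 f) (L2sq_ge0 g).
case: (L2sq f) => [a| |] //; case: (L2sq g) => [b| |] //; rewrite !lee_fin => a1 b1 a0 b0.
by change ((a + b - 2)%:E <= 0%:E)%E; rewrite lee_fin; lra.
Qed.

Lemma mu_aeW (A B : T -> Prop) : (forall x, X x -> A x -> B x) ->
  mu_ae lam X mu A -> mu_ae lam X mu B.
Proof.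
move=> AB [N [mN [NX [N0 hN]]]]; exists N; do 3!split=> //.
by move=> x Xx /(hN x Xx); exact: AB.
Qed.

Lemma L2sq_eq0_ae h : measurable_fun X h -> L2sq h = 0%E ->
  mu_ae lam X mu (fun x => h x = 0).
Proof.
move=> mh h0.
have /(ae_eq_integral_abs lam mX (measurable_sqr_mu mh)).1 [N0 [mN0 N00 hN0]] :
    (\int[lam]_(x in X) `|(h x ^+ 2 * mu x)%:E| = 0)%E.
  by rewrite -h0; apply: eq_integral => x /[!inE] Xx; rewrite gee0_abs ?sqr_mu_ge0.
pose N := X `&` h @^-1` [set~ 0].
have mN : measurable N := mh mX _ (measurableC (measurable_set1 0)).
exists N; split=> //; split; first exact: subIsetl.
split; last by move=> x Xx nNx; apply: contra_notP nNx => hx0; split.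
rewrite (ae_eq_integral (cst 0%E)) ?integral0 //.
  by apply/measurable_EFinP; apply: measurable_funS mmu => //; exact: subIsetl.
exists N0; split => // x /= /not_implyP [[Xx hx0] mux0].
apply: hN0 => /(_ Xx) /eqP; rewrite eqe mulf_eq0 sqrf_eq0.
by case/orP => /eqP; [exact: hx0 | move=> mu0; apply: mux0; rewrite mu0].
Qed.

Lemma L2norm_fin_neq0 f : L2norm lam X mu f \is a fin_num ->
  L2norm lam X mu f != 0%E -> exists2 i, L2sq f = i%:E & 0 < i.
Proof.
rewrite L2normE; case: (L2sq f) (L2sq_ge0 f) => [i| |] //= i0 _ si0.
exists i => //; rewrite lt_def -lee_fin i0 andbT.
by apply: contraNneq si0 => ->; rewrite sqrtr0.
Qed.

Lemma measurable_cutoff n r : measurable_fun X r -> measurable_fun X (cutoff n r).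
Proof.
move=> mr; apply: measurable_fun_if => //.
- by apply: measurable_fun_ler => //; exact: measurableT_comp.
- by apply: measurable_funS mr => //; exact: subIsetl.
Qed.

Lemma L2sq_cutoff_le n r : measurable_fun X r ->
  (L2sq (cutoff n r) <= (n%:R ^+ 2)%:E * \int[lam]_(x in X) (mu x)%:E)%E.
Proof.
move=> mr; rewrite -ge0_integralZl_EFin ?sqr_ge0 //; last exact/measurable_EFinP.
apply: ge0_le_integral => //.
- exact: sqr_mu_ge0.
- exact/measurable_sqr_mu/measurable_cutoff.
- by apply: emeasurable_funM => //; exact/measurable_EFinP.
move=> x Xx; rewrite -EFinM lee_fin ler_wpM2r ?mu_ge0 // /cutoff.
case: ifP => [rn|_]; last by rewrite expr0n /= sqr_ge0.
by rewrite -(real_normK (num_real (r x))) !expr2 ler_pM ?normr_ge0.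
Qed.

Lemma L2sq_cutoff_cvg r : measurable_fun X r ->
  (L2sq (cutoff n r) @[n --> \oo] --> L2sq r)%E.
Proof.
move=> mr.
have -> : L2sq r = (\int[lam]_(x in X) limn (fun n => (cutoff n r x ^+ 2 * mu x)%:E))%E.
  apply: eq_integral => x _; apply/esym/(lim_near_cst (@ereal_hausdorff R)).
  exists (Num.trunc `|r x|).+1 => // m /= hm.
  by rewrite /cutoff ifT // ltW // (lt_le_trans (truncnS_gt _)) // ler_nat.
apply: cvg_monotone_convergence => //.
- by move=> n; exact/measurable_sqr_mu/measurable_cutoff.
- by move=> n x Xx; exact: sqr_mu_ge0.
move=> x Xx m n mn; rewrite lee_fin ler_wpM2r ?mu_ge0 // /cutoff.
case: ifP => [rm|_]; last by rewrite expr0n /=; case: ifP => _; exact: sqr_ge0.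
by rewrite (le_trans rm) // ler_nat.
Qed.

Lemma L2norm_cutoff_attained n r : measurable_fun X r ->
  (\int[lam]_(x in X) (mu x)%:E < +oo)%E ->
  exists2 f, measurable_fun X f /\ (L2sq f <= 1)%E &
    L2dot f r = L2norm lam X mu (cutoff n r).
Proof.
move=> mr mu_fin; have mc := measurable_cutoff n mr.
have : (L2sq (cutoff n r) < +oo)%E.
  by apply: le_lt_trans (L2sq_cutoff_le n mr) _; rewrite lte_mul_pinfty.
case hc : (L2sq (cutoff n r)) (L2sq_ge0 (cutoff n r)) => [c| |] //.
rewrite lee_fin => c0 _.
exists (fun x => (Num.sqrt c)^-1 * cutoff n r x).
  by split; [exact: measurable_funM | exact: L2sq_normalize_le1].
rewrite L2normE hc /= -(L2dot_normalize mc hc c0).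
by apply: eq_integral => x _; rewrite -[_ * r x]mulrA cutoff_mul expr2 mulrA.
Qed.

Lemma L2norm_le_sup r S : measurable_fun X r ->
  (\int[lam]_(x in X) (mu x)%:E < +oo)%E ->
  (forall f, measurable_fun X f -> (L2sq f <= 1)%E -> (L2dot f r <= S)%E) ->
  (L2norm lam X mu r <= S)%E.
Proof.
move=> mr mu_fin L2dot_le.
have cutoff_le n : (L2norm lam X mu (cutoff n r) <= S)%E.
  by have [f [mf f1] <-] := L2norm_cutoff_attained n mr mu_fin; exact: L2dot_le.
have S0 : (0 <= S)%E := le_trans (sqrte_ge0 _) (cutoff_le 0%N).
have L2norm_leS h : (L2norm lam X mu h <= S)%E = (L2sq h <= S ^+ 2)%E.
  by rewrite L2normE -[leRHS](gee0_abs S0) -sqrte_sqr lee_sqrt ?sqre_ge0.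
rewrite L2norm_leS -(cvg_lim _ (L2sq_cutoff_cvg mr)) //.
apply: lime_le; first exact: cvgP (L2sq_cutoff_cvg mr).
by apply: nearW => n; rewrite -L2norm_leS.
Qed.

End WeightedL2.

Definition density_ratio (R : fieldType) (T : Type) (p q mu : T -> R) (x : T) : R :=
  (p x - q x) / mu x.

Section FisherIPM.
Context {dT : measure_display} {T : measurableType dT} {R : realType}.
Variables (lam : {measure set T -> \bar R}) (X : set T) (P Q mu : T -> R).
Hypotheses (mX : measurable X) (mP : measurable_fun X P) (mQ : measurable_fun X Q)
  (mmu : measurable_fun X mu) (mu_pos : forall x, X x -> 0 < mu x).
Implicit Types (f : T -> R) (i : R).

Local Notation ratio := (density_ratio P Q mu).

Let mu_ge0 x : X x -> 0 <= mu x. Proof. by move/mu_pos/ltW. Qed.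

Lemma measurable_density_ratio : measurable_fun X ratio.
Proof.
by apply: measurable_funM; [exact: measurable_funB | exact: measurable_funV_pos].
Qed.

Lemma mean_diff_L2dot f : mean_diff lam X P Q f = L2dot lam X mu f ratio.
Proof.
apply: eq_integral => x /[!inE] Xx; congr EFin.
by rewrite /density_ratio -mulrA divfK // gt_eqF // mu_pos.
Qed.

Lemma fisher_ipm_L2norm : (\int[lam]_(x in X) (mu x)%:E < +oo)%E ->
  fisher_ipm lam X mu P Q = L2norm lam X mu ratio.
Proof.
move=> mu_fin; apply/eqP; rewrite eq_le; apply/andP; split.
  apply: ge_ereal_sup => _ [f [[mf _] f1] <-].
  rewrite mean_diff_L2dot; apply: (L2dot_le_L2norm mX mmu mu_ge0) => //.
  - exact: measurable_density_ratio.
  - by rewrite -L2norm_le1.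
apply: (L2norm_le_sup mX mmu mu_ge0 measurable_density_ratio mu_fin) => f mf f1.
rewrite -(mean_diff_L2dot f); apply: ereal_sup_ubound; exists f => //.
have f1' : (L2norm lam X mu f <= 1)%E by rewrite L2norm_le1.
by split=> //; split=> //; exact: le_lt_trans f1' (ltry 1).
Qed.

Section Critic.
Variable i : R.
Hypotheses (ratio_i : L2sq lam X mu ratio = i%:E) (i_gt0 : 0 < i).

Local Notation critic := (fun x => (Num.sqrt i)^-1 * ratio x).

Lemma critic_admissible : inL2 lam X mu critic /\ (L2norm lam X mu critic <= 1)%E.
Proof.
have mc : measurable_fun X critic.
  exact: measurable_funM (measurable_cst _) measurable_density_ratio.
have c1 : (L2norm lam X mu critic <= 1)%E.
  rewrite L2norm_le1; apply: (L2sq_normalize_le1 mX mmu mu_ge0 _ ratio_i (ltW i_gt0)).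
  exact: measurable_density_ratio.
by split=> //; split=> //; exact: le_lt_trans c1 (ltry 1).
Qed.

Lemma mean_diff_critic : mean_diff lam X P Q critic = (Num.sqrt i)%:E.
Proof.
rewrite mean_diff_L2dot; apply: (L2dot_normalize mX mmu mu_ge0 _ ratio_i (ltW i_gt0)).
exact: measurable_density_ratio.
Qed.

Lemma critic_unique_ae f : inL2 lam X mu f -> (L2norm lam X mu f <= 1)%E ->
  mean_diff lam X P Q f = (Num.sqrt i)%:E -> mu_ae lam X mu (fun x => f x = critic x).
Proof.
move=> [mf _] f1 f_opt.
have mr := measurable_density_ratio.
have s_gt0 : 0 < Num.sqrt i by rewrite sqrtr_gt0.
have fin h : (L2norm lam X mu h <= 1)%E -> (L2sq lam X mu h < +oo)%E.
  by rewrite L2norm_le1 => /le_lt_trans; apply; exact: ltry.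
have [[mc _] c1] := critic_admissible.
have fc1 : L2dot lam X mu f critic = 1%E.
  rewrite (L2dotZr mX mmu mu_ge0 _ mf mr (fin _ f1)); last by rewrite ratio_i ltry.
  by rewrite -(mean_diff_L2dot f) f_opt -EFinM mulVf // gt_eqF.
have := L2sq_sub_eq0 mX mmu mu_ge0 mf mc _ _ fc1.
rewrite -!L2norm_le1 => /(_ f1 c1) /(L2sq_eq0_ae mX mmu mu_ge0 (measurable_funB mf mc)).
by apply: mu_aeW => x _ /= /eqP; rewrite subr_eq0 => /eqP.
Qed.

End Critic.
End FisherIPM.

Theorem theorem1 (dT : measure_display) (T : measurableType dT) (R : realType)
  (lam : {measure set T -> \bar R}) (X : set T) (mX : measurable X)
  (P Q mu : T -> R)
  (hP : is_density lam X P) (hQ : is_density lam X Q) (hmu : is_density lam X mu)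
  (mu_pos : forall x, X x -> 0 < mu x) :
  let ratio := fun x => (P x - Q x) / mu x in
  fisher_ipm lam X mu P Q = L2norm lam X mu ratio /\
  (fisher_ipm lam X mu P Q \is a fin_num ->
   fisher_ipm lam X mu P Q != 0%E ->
   let fchi := fun x => (fine (fisher_ipm lam X mu P Q))^-1 * ratio x in
   (inL2 lam X mu fchi /\ (L2norm lam X mu fchi <= 1)%E /\
    mean_diff lam X P Q fchi = fisher_ipm lam X mu P Q) /\
   (forall f, inL2 lam X mu f -> (L2norm lam X mu f <= 1)%E ->
      mean_diff lam X P Q f = fisher_ipm lam X mu P Q ->
      mu_ae lam X mu (fun x => f x = fchi x))).
Proof.
move=> ratio.
case: hP => mP _; case: hQ => mQ _; case: hmu => mmu [_ int_mu].
have mu_fin : (\int[lam]_(x in X) (mu x)%:E < +oo)%E by rewrite int_mu ltry.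
have F_L2 : fisher_ipm lam X mu P Q = L2norm lam X mu ratio :=
  fisher_ipm_L2norm mX mP mQ mmu mu_pos mu_fin.
split=> // F_fin F_neq0 fchi.
have [i ratio_i i_gt0] : exists2 i, L2sq lam X mu ratio = i%:E & 0 < i.
  by move: F_fin F_neq0; rewrite F_L2; apply: L2norm_fin_neq0 => x /mu_pos/ltW.
have F_i : fisher_ipm lam X mu P Q = (Num.sqrt i)%:E by rewrite F_L2 L2normE ratio_i.
rewrite /fchi F_i /=.
have [adm c1] := critic_admissible mX mP mQ mmu mu_pos ratio_i i_gt0.
split; first by split=> //; split=> //; exact: mean_diff_critic.
exact: critic_unique_ae ratio_i i_gt0.
Qed.
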